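(* Let $N\ge2$ be even, let $\phi$ lie in the closed interval with endpoints $0$ and $\phi^*_N$, let $\theta=\theta(\phi)$, and let $\phi'=N\phi/2$, $\theta'=\theta-\frac{N-2}2\phi$. Then $(\phi',\theta')\in\mathcal F$.
   Context: $\mathcal G=(\pi/4,\pi/2)\cup(\pi/2,3\pi/4)\cup(5\pi/4,3\pi/2)\cup(3\pi/2,7\pi/4)$, $\mathcal F=\big[(-\pi/4,\pi/4)\times\mathcal G\big]\cup\big[((-\pi/4,\pi/4)\setminus\{0\})\times\{\pi/2,3\pi/2\}\big]$. $\theta^*_N=2\pi t_N/(N+1)$ with $t_N=N/4+1/2,\ N/4,\ 3N/4+1/2,\ 3N/4+1$ for $N\equiv2,4,6,0\pmod8$; $\theta(\phi)=\frac{N-1}{N+1}\phi+\theta^*_N$; $\phi^*_N=\mathrm{sgn}[\sin(2\theta^*_N)]\frac{\pi}{4N}$. *)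

From Stdlib Require Import Reals Lra Lia.
Open Scope R_scope.

Definition in_G (t : R) : Prop :=
  (PI/4 < t < PI/2) \/ (PI/2 < t < 3*PI/4) \/
  (5*PI/4 < t < 3*PI/2) \/ (3*PI/2 < t < 7*PI/4).

Definition in_F (p t : R) : Prop :=
  (-(PI/4) < p < PI/4 /\ in_G t) \/
  (-(PI/4) < p < PI/4 /\ p <> 0 /\ (t = PI/2 \/ t = 3*PI/2)).

Definition t_N (N : nat) : R :=
  match (N mod 8)%nat with
  | 2%nat => INR N / 4 + 1/2
  | 4%nat => INR N / 4
  | 6%nat => 3 * INR N / 4 + 1/2
  | _ => 3 * INR N / 4 + 1        (* N = 0 mod 8 *)
  end.

Definition theta_star (N : nat) : R := 2 * PI * t_N N / (INR N + 1).

Definition theta_of (N : nat) (phi : R) : R :=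
  (INR N - 1) / (INR N + 1) * phi + theta_star N.

Definition sgn (x : R) : R :=
  match Rlt_dec 0 x with
  | left _ => 1
  | right _ => match Rlt_dec x 0 with left _ => -1 | right _ => 0 end
  end.

Definition phi_star (N : nat) : R :=
  sgn (sin (2 * theta_star N)) * (PI / (4 * INR N)).

From Stdlib Require Import Reals Lra Lia.
Open Scope R_scope.

(* Write n = INR N.  For every even N >= 2 the angle
   theta*_N sits at distance pi/(2(n+1)) from one of the vertical axes
   B in {pi/2, 3pi/2}:  theta*_N = B + s*pi/(2(n+1)) with a sign s = +-1
   determined by N mod 8 (theta_star_near_axis).  Since sin(2B + x) = - sin x,
   this forces phi*_N = - s*pi/(4n) (phi_star_near_axis), so the hypothesis on
   phi says that v := - s*n*phi lies in [0, pi/4].  Independently of N,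
   theta' = theta*_N + (3-n)*n*phi/(2(n+1)) (theta_prime_eq), which rewrites as
   theta' = B + s*(pi + (n-3)v)/(2(n+1)); the offset (pi + (n-3)v)/(2(n+1))
   lies strictly between 0 and pi/4 for n >= 2 (axis_offset_bounds), so theta'
   falls in one of the four open intervals of G around B (in_G_near_axis),
   while phi' = n*phi/2 = - s*v/2 lies in [-pi/8, pi/8].  Hence (phi', theta')
   belongs to the first component (-pi/4, pi/4) x G of F. *)

Definition is_axis (B : R) : Prop := B = PI/2 \/ B = 3*PI/2.
Definition is_unit_sign (s : R) : Prop := s = 1 \/ s = -1.

Lemma sgn_signed (s x : R) : is_unit_sign s -> 0 < x -> sgn (s * x) = s.
Proof.
  intros [-> | ->] Hx; unfold sgn.
  - destruct (Rlt_dec 0 (1 * x)); lra.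
  - destruct (Rlt_dec 0 (-1 * x)); [lra|].
    destruct (Rlt_dec (-1 * x) 0); lra.
Qed.

Lemma in_G_near_axis (B s d : R) :
  is_axis B -> is_unit_sign s -> 0 < d < PI/4 -> in_G (B + s * d).
Proof.
  intros [-> | ->] [-> | ->] Hd; unfold in_G; lra.
Qed.

(* The offset of theta' from its axis, measured by v = |n phi| in [0, pi/4]. *)
Lemma axis_offset_bounds (n v : R) :
  2 <= n -> 0 <= v <= PI/4 -> 0 < (PI + (n - 3) * v) / (2 * (n + 1)) < PI/4.
Proof.
  intros Hn Hv. pose proof PI_RGT_0.
  assert (Hnum : 0 < PI + (n - 3) * v < (n + 1) * PI / 2) by nra.
  split.
  - apply Rdiv_lt_0_compat; lra.
  - apply Rmult_lt_reg_r with (2 * (n + 1)); [lra|].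
    unfold Rdiv. rewrite Rmult_assoc, Rinv_l by lra. nra.
Qed.

Lemma between_zero_signed (s a phi : R) :
  is_unit_sign s -> 0 < a ->
  Rmin 0 (- s * a) <= phi <= Rmax 0 (- s * a) -> 0 <= - s * phi <= a.
Proof.
  intros [-> | ->] Ha.
  - rewrite Rmin_right, Rmax_left by lra. lra.
  - rewrite Rmin_left, Rmax_right by lra. lra.
Qed.

Lemma in_F_near_axis (n phi B s : R) :
  2 <= n -> is_axis B -> is_unit_sign s ->
  Rmin 0 (- s * (PI / (4 * n))) <= phi <= Rmax 0 (- s * (PI / (4 * n))) ->
  in_F (n * phi / 2)
       (B + s * (PI / (2 * (n + 1))) + (3 - n) * (n * phi) / (2 * (n + 1))).
Proof.
  intros Hn HB Hs Hphi. pose proof PI_RGT_0.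
  assert (Ha : 0 < PI / (4 * n)) by (apply Rdiv_lt_0_compat; lra).
  pose proof (between_zero_signed s _ phi Hs Ha Hphi) as Hsphi.
  set (v := - s * (n * phi)).
  assert (Hv : 0 <= v <= PI/4).
  { assert (Ev : v = n * (- s * phi)) by (unfold v; ring).
    assert (Ebound : n * (PI / (4 * n)) = PI/4) by (field; lra).
    rewrite Ev. nra. }
  assert (Enphi : n * phi = - s * v) by (unfold v; destruct Hs as [-> | ->]; ring).
  assert (Etheta : B + s * (PI / (2 * (n + 1))) + (3 - n) * (n * phi) / (2 * (n + 1))
                   = B + s * ((PI + (n - 3) * v) / (2 * (n + 1)))).
  { rewrite Enphi. destruct Hs as [-> | ->]; field; lra. }
  left. rewrite Etheta. split.
  - unfold Rdiv at 1. rewrite Enphi. destruct Hs as [-> | ->]; lra.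
  - apply in_G_near_axis; auto using axis_offset_bounds.
Qed.

Lemma theta_star_near_axis (N : nat) :
  Nat.Even N ->
  exists B s, is_axis B /\ is_unit_sign s /\
              theta_star N = B + s * (PI / (2 * (INR N + 1))).
Proof.
  intros [k Hk].
  assert (Hmod : (N mod 8 = 0 \/ N mod 8 = 2 \/ N mod 8 = 4 \/ N mod 8 = 6)%nat).
  { pose proof (Nat.div_mod N 8 ltac:(lia)).
    pose proof (Nat.mod_upper_bound N 8 ltac:(lia)). lia. }
  pose proof (pos_INR N).
  unfold theta_star, t_N, is_axis, is_unit_sign.
  destruct Hmod as [-> | [-> | [-> | ->]]].
  - exists (3*PI/2), 1. repeat split; auto. field. lra.
  - exists (PI/2), 1. repeat split; auto. field. lra.
  - exists (PI/2), (-1). repeat split; auto. field. lra.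
  - exists (3*PI/2), (-1). repeat split; auto. field. lra.
Qed.

(* Since sin(2B + x) = - sin x on an axis B, the sign defining phi*_N is -s. *)
Lemma phi_star_near_axis (N : nat) (B s : R) :
  (1 <= N)%nat -> is_axis B -> is_unit_sign s ->
  theta_star N = B + s * (PI / (2 * (INR N + 1))) ->
  phi_star N = - s * (PI / (4 * INR N)).
Proof.
  intros HN HB Hs Htheta.
  assert (Hn : 1 <= INR N) by (apply le_INR in HN; simpl in HN; lra).
  assert (Hx : 0 < sin (PI / (INR N + 1))).
  { pose proof PI_RGT_0. apply sin_gt_0.
    - apply Rdiv_lt_0_compat; lra.
    - apply Rmult_lt_reg_r with (INR N + 1); [lra|].
      unfold Rdiv. rewrite Rmult_assoc, Rinv_l by lra. nra. }
  assert (Hsin : sin (2 * theta_star N) = - s * sin (PI / (INR N + 1))).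
  { set (x := PI / (INR N + 1)).
    assert (Hsx : sin (s * x) = s * sin x).
    { destruct Hs as [-> | ->].
      - rewrite !Rmult_1_l. reflexivity.
      - replace (-1 * x) with (- x) by ring. rewrite sin_neg. ring. }
    destruct HB as [-> | ->]; rewrite Htheta.
    - replace (2 * (PI / 2 + s * (PI / (2 * (INR N + 1))))) with (s * x + PI)
        by (unfold x; field; lra).
      rewrite neg_sin, Hsx. ring.
    - replace (2 * (3 * PI / 2 + s * (PI / (2 * (INR N + 1)))))
        with ((s * x + PI) + 2 * INR 1 * PI) by (unfold x; simpl; field; lra).
      rewrite sin_period, neg_sin, Hsx. ring. }
  unfold phi_star. rewrite Hsin, sgn_signed; [reflexivity | | exact Hx].
  destruct Hs as [-> | ->]; [right | left]; ring.
Qed.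

Lemma theta_prime_eq (N : nat) (phi : R) :
  theta_of N phi - (INR N - 2) / 2 * phi
  = theta_star N + (3 - INR N) * (INR N * phi) / (2 * (INR N + 1)).
Proof.
  pose proof (pos_INR N). unfold theta_of. field. lra.
Qed.

Theorem proposition7 (N : nat) (phi : R) :
  (2 <= N)%nat -> Nat.Even N ->
  Rmin 0 (phi_star N) <= phi <= Rmax 0 (phi_star N) ->
  in_F (INR N * phi / 2) (theta_of N phi - (INR N - 2) / 2 * phi).
Proof.
  intros HN Heven Hphi.
  destruct (theta_star_near_axis N Heven) as (B & s & HB & Hs & Htheta).
  rewrite (phi_star_near_axis N B s ltac:(lia) HB Hs Htheta) in Hphi.
  rewrite theta_prime_eq, Htheta.
  apply in_F_near_axis; auto.
  apply le_INR in HN. simpl in HN. lra.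
Qed.
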